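(* Let $m\ge2$, $G=CK(2m-1)$, and let $B$ be a blocker for the simple Hamiltonian paths of $G$ whose $m$ edges are parallel (or equal) to the boundary edges $[0,1],\dots,[m-1,m]$, one per direction. Let $[\alpha,\alpha+1]$ and $[m-\delta-1,m-\delta]$ be the first and last edges of $\langle0,1,\dots,m\rangle$ belonging to $B$. Let $e\in B$ be parallel to one of the $\alpha+\delta$ boundary edges $[0,1],\dots,[\alpha-1,\alpha],[m-\delta,m-\delta+1],\dots,[m-1,m]$. Put $A=\langle\alpha,\alpha+1,\dots,m-\delta\rangle$ and $\bar A=\langle m-\delta,\dots,2m-2,0,1,\dots,\alpha\rangle$. Then $e$ connects an internal vertex of $A$ to an internal vertex of $\bar A$.
   Context: $CK(2m-1)$ is the complete convex geometric graph on $2m-1$ points in convex position, labelled clockwise $0,\dots,2m-2$ (elements of $\mathbb{Z}_{2m-1}$), with all segments as edges; boundary edges are $[i,i+1]$. The direction of $[i,j]$ is $i+j\pmod{2m-1}$; edges are parallel if they have the same direction. A simple Hamiltonian path (SHP) is a path through all vertices whose edges pairwise do not cross; a blocker for SHPs is an edge set of smallest possible size sharing an edge with every SHP. *)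

From mathcomp Require Import all_boot.
Set Implicit Arguments. Unset Strict Implicit. Unset Printing Implicit Defensive.

(* Convex complete geometric graph CK(n) on points 0..n-1 (clockwise) in
   convex position.  Vertices: 'I_n.  An edge (segment) is a 2-element
   subset of 'I_n. *)
Section CK.
Variable n : nat.

Definition is_edge (e : {set 'I_n}) : bool := #|e| == 2.

Definition is_edge_ab (e : {set 'I_n}) (a b : nat) : bool :=
  [forall x : 'I_n, (x \in e) == ((val x == a) || (val x == b))].

Definition dir (e : {set 'I_n}) : nat := (\sum_(i in e) (val i)) %% n.

(* x lies strictly between the two endpoints of e (in the linear order 0..n-1) *)
Definition between (e : {set 'I_n}) (x : 'I_n) : bool :=
  #|[set z in e | val z < val x]| == 1.

(* two segments between points in convex position cross iff their four
   endpoints are distinct and interleave *)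
Definition cross (e f : {set 'I_n}) : bool :=
  [disjoint e & f] &&
  [exists x in f, exists y in f, between e x && ~~ between e y].

Definition path_edges (p : seq 'I_n) : seq {set 'I_n} :=
  match p with
  | [::] => [::]
  | x :: q => pairmap (fun a b => [set a; b]) x q
  end.

Definition is_SHP (p : seq 'I_n) : bool :=
  [&& size p == n, uniq p &
      all (fun e => all (fun f => ~~ cross e f) (path_edges p)) (path_edges p)].

Definition blocks (B : {set {set 'I_n}}) : Prop :=
  forall p : seq 'I_n, is_SHP p -> has (fun e => e \in B) (path_edges p).

Definition is_blocker (B : {set {set 'I_n}}) : Prop :=
  [/\ (forall e, e \in B -> is_edge e),
      blocks B &
      forall B' : {set {set 'I_n}},
        (forall e, e \in B' -> is_edge e) -> blocks B' -> #|B| <= #|B'|].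

End CK.

From mathcomp Require Import all_boot zify.
Set Implicit Arguments. Unset Strict Implicit. Unset Printing Implicit Defensive.

(* Write e = [x, y] with x < y.  If both endpoints lie in A, the direction x + y of e lies
   in [2 alpha + 1, 2 (m - delta) - 1], which contains no direction 2 i + 1 with i < alpha
   or i >= m - delta.  Otherwise, if neither endpoint is interior to A, both lie in Abar,
   and the arc of Abar joining them contains no side [i, i+1] of the polygon that belongs
   to B: for i < m by the choice of alpha and delta, and for i >= m because such a side has
   an even direction 2, 4, ..., 2m - 2, while B uses only 0, 1, 3, ..., 2m - 3.  Walk along
   this arc from one end of e to the other, then zigzag outwards, alternately to the next
   vertex beyond either end.  The visited vertices always form an arc, so the walk is a
   simple Hamiltonian path.  Its edges are sides of the free arc, chords parallel to e
   other than e itself, and chords of the even direction next to that of e (above it, or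
   below it when e has direction 0).  Since e is the only edge of B in its direction, the
   path avoids B, contradicting that B is a blocker. *)

Lemma modn_wrap n z : z < 2 * n -> z %% n = if z < n then z else z - n.
Proof.
move=> lt_z2n; case: ifP => [/modn_small // | /negbT]; rewrite -leqNgt => le_nz.
by rewrite -{1}(subnK le_nz) modnDr modn_small //; lia.
Qed.

Definition strictly_between (u v z : nat) : Prop := u < z < v \/ v < z < u.

Definition interleaved (u v x y : nat) : Prop :=
  x <> u /\ x <> v /\ y <> u /\ y <> v /\
  (strictly_between u v x <-> ~ strictly_between u v y).

Lemma interleaved_sym u v x y : interleaved u v x y -> interleaved x y u v.
Proof. rewrite /interleaved /strictly_between; lia. Qed.

Lemma interleaved_reflect N u v x y : u <= N -> v <= N -> x <= N -> y <= N ->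
  interleaved (N - u) (N - v) (N - x) (N - y) -> interleaved u v x y.
Proof. rewrite /interleaved /strictly_between; lia. Qed.

Lemma interleaved_succ n u v x y : u < n -> v < n -> x < n -> y < n ->
  interleaved (u.+1 %% n) (v.+1 %% n) (x.+1 %% n) (y.+1 %% n) -> interleaved u v x y.
Proof.
move=> ltun ltvn ltxn ltyn; rewrite !modn_wrap; try lia.
by rewrite /interleaved /strictly_between; case: ifP; case: ifP; case: ifP; case: ifP; lia.
Qed.

Lemma interleaved_rot n k u v x y : u < n -> v < n -> x < n -> y < n ->
  interleaved ((u + k) %% n) ((v + k) %% n) ((x + k) %% n) ((y + k) %% n) ->
  interleaved u v x y.
Proof.
move=> ltun ltvn ltxn ltyn; have n_gt0 : 0 < n by lia.
elim: k => [|k IHk]; first by rewrite !addn0 !modn_small.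
have addSE c : (c + k.+1) %% n = ((c + k) %% n).+1 %% n.
  by rewrite addnS -[in RHS]addn1 modnDml addn1.
rewrite !addSE => /interleaved_succ rotated; apply/IHk/rotated; exact: ltn_pmod.
Qed.

Definition steps (T : Type) (p : seq T) : seq (T * T) :=
  if p is x :: q then pairmap pair x q else [::].

Lemma steps_map (T S : Type) (h : T -> S) (p : seq T) :
  steps (map h p) = [seq (h f.1, h f.2) | f <- steps p].
Proof. by case: p => //= x q; elim: q x => //= y q IHq x; rewrite IHq. Qed.

Lemma mem_steps (T : eqType) (p : seq T) f : f \in steps p -> f.1 \in p /\ f.2 \in p.
Proof.
case: p => //= x q; elim: q x => //= y q IHq x.
rewrite inE => /orP[/eqP -> | /IHq]; first by rewrite !inE !eqxx orbT.
by rewrite !inE => -[-> ->]; rewrite !orbT.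
Qed.

Lemma steps_neq (T : eqType) (p : seq T) f : uniq p -> f \in steps p -> f.1 != f.2.
Proof.
case: p => //= x q; elim: q x => //= y q IHq x /andP[xNyq uniq_yq].
rewrite inE => /orP[/eqP -> | /(IHq y uniq_yq) //] /=.
by apply: contraNneq xNyq => ->; rewrite mem_head.
Qed.

Lemma path_edges_steps n (p : seq 'I_n) :
  path_edges p = [seq [set f.1; f.2] | f <- steps p].
Proof. by case: p => //= x q; elim: q x => //= y q IHq x; rewrite IHq. Qed.

Lemma is_edge_pair_lt n (e : {set 'I_n}) :
  is_edge e -> exists x y : 'I_n, x < y /\ e = [set x; y].
Proof.
move=> /cards2P[x [y [neq_xy ->]]].
case: (ltngtP x y) => [lt_xy | lt_yx | /val_inj eq_xy]; first by exists x, y.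
  by exists y, x; rewrite setUC.
by rewrite eq_xy eqxx in neq_xy.
Qed.

Definition noncrossing (p : seq nat) : Prop :=
  forall f g, f \in steps p -> g \in steps p -> ~ interleaved f.1 f.2 g.1 g.2.

Fixpoint widen (lo hi : nat) (ds : seq bool) : seq nat :=
  match ds with
  | [::] => [::]
  | true :: ds' => hi.+1 :: widen lo hi.+1 ds'
  | false :: ds' => lo.-1 :: widen lo.-1 hi ds'
  end.

Lemma size_widen lo hi ds : size (widen lo hi ds) = size ds.
Proof. by elim: ds lo hi => [|[] ds IHds] lo hi //=; rewrite IHds. Qed.

Lemma mem_widen lo hi ds z : z \in widen lo hi ds -> count negb ds <= lo ->
  lo - count negb ds <= z < lo \/ hi < z <= hi + count id ds.
Proof.
elim: ds lo hi => [|[] ds IHds] lo hi //=; rewrite inE => /orP[/eqP -> | /IHds]; lia.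
Qed.

Lemma uniq_widen lo hi cur ds : lo <= cur <= hi -> count negb ds <= lo ->
  uniq (cur :: widen lo hi ds).
Proof.
elim: ds lo hi cur => [|[] ds IHds] lo hi cur cur_in //= le_lo;
  rewrite -/(uniq (_ :: widen _ _ ds)) IHds ?andbT ?inE ?negb_or; try lia;
  by apply/andP; split; [lia | apply/negP => /mem_widen; lia].
Qed.

Lemma steps_widen_avoid_inner lo hi cur ds (f : nat * nat) g1 g2 :
  f \in steps (cur :: widen lo hi ds) ->
  lo <= hi -> cur = lo \/ cur = hi -> count negb ds <= lo ->
  lo <= g1 <= hi -> lo <= g2 <= hi -> ~ interleaved f.1 f.2 g1 g2.
Proof.
rewrite /interleaved /strictly_between.
elim: ds lo hi cur => [|[] ds IHds] lo hi cur //=;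
  rewrite -/(steps (_ :: widen _ _ ds)) inE => /orP[/eqP -> /= | /IHds IH *];
  [lia | apply: IH; lia | lia | apply: IH; lia].
Qed.

Lemma noncrossing_widen lo hi cur ds :
  lo <= hi -> cur = lo \/ cur = hi -> count negb ds <= lo ->
  noncrossing (cur :: widen lo hi ds).
Proof.
elim: ds lo hi cur => [|d ds IHds] lo hi cur le_lohi cur_end le_lo f g //.
have [lo' [hi' [next [-> [le_lohi' next_end le_lo' cur_in next_in]]]]] :
    exists lo' hi' next, widen lo hi (d :: ds) = next :: widen lo' hi' ds /\
      [/\ lo' <= hi', next = lo' \/ next = hi', count negb ds <= lo',
           lo' <= cur <= hi' & lo' <= next <= hi'].
  case: d le_lo => /= le_lo; [exists lo, hi.+1, hi.+1 | exists lo.-1, hi, lo.-1];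
  by split=> //; split; lia.
have avoid_head h : h \in steps (next :: widen lo' hi' ds) -> ~ interleaved h.1 h.2 cur next.
  by move/steps_widen_avoid_inner; apply.
rewrite /= -/(steps (next :: _)) !inE.
case/orP=> [/eqP -> | f_in] /orP[/eqP -> | g_in] /=.
- by rewrite /interleaved; lia.
- by move/interleaved_sym; apply: avoid_head.
- exact: avoid_head.
- exact: IHds f_in g_in.
Qed.

Fixpoint alternate (b : bool) (k : nat) : seq bool :=
  if k is k'.+1 then b :: alternate (~~ b) k' else [::].

Lemma size_alternate b k : size (alternate b k) = k.
Proof. by elim: k b => [|k IHk] b //=; rewrite IHk. Qed.

Lemma count_alternate b k :
  count negb (alternate b k) = (k + ~~ b)./2 /\ count id (alternate b k) = (k + b)./2.
Proof.
elim: k b => [|k IHk] b; first by case: b.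
by rewrite /=; case: (IHk (~~ b)) => -> ->; case: b => /=; lia.
Qed.

Lemma steps_walk_down j lo hi ds (f : nat * nat) :
  f \in steps (lo :: widen lo hi (nseq j false ++ ds)) -> j <= lo ->
  (f.1 = f.2.+1 /\ lo - j <= f.2 /\ f.1 <= lo) \/
  f \in steps ((lo - j) :: widen (lo - j) hi ds).
Proof.
elim: j lo => [|j IHj] lo; first by rewrite subn0; right.
rewrite /= -!/(steps (_ :: _)) inE => /orP[/eqP -> /= | /IHj IH lt_jlo]; first lia.
have [unit_step | later] : _ \/ _ := IH ltac:(lia); first by left; lia.
by right; rewrite (_ : lo - j.+1 = lo.-1 - j) //; lia.
Qed.

Lemma steps_zigzag b k lo hi (f : nat * nat) :
  f \in steps ((if b then lo else hi) :: widen lo hi (alternate b k)) ->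
  count negb (alternate b k) <= lo ->
  (hi + f.1 < lo + f.2 \/ hi + f.2 < lo + f.1) /\
  (f.1 + f.2 = lo + hi + b \/ f.1 + f.2 + 1 = lo + hi + b).
Proof.
elim: k b lo hi => [|k IHk] [] lo hi //=;
  rewrite -/(steps (_ :: widen _ _ (alternate _ k))) inE => /orP[/eqP -> /= | /IHk]; lia.
Qed.

(* Endpoint sums are directions: the long chords are parallel to [a, a + L - 1] or to
   the next direction above it ([up]) or below it. *)
Definition arc_path (n L a : nat) (up : bool) (p : seq nat) : Prop :=
  [/\ size p = n, uniq p, all (gtn n) p, noncrossing p &
      forall f : nat * nat, f \in steps p ->
        ((f.1 = f.2.+1 \/ f.2 = f.1.+1) /\ a <= f.1 < a + L /\ a <= f.2 < a + L) \/
        ((f.1 + L <= f.2 \/ f.2 + L <= f.1) /\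
         (f.1 + f.2 = 2 * a + L - 1 \/
          f.1 + f.2 = (if up then 2 * a + L else 2 * a + L - 2)))].

Definition zigzag_path (n L : nat) : seq nat :=
  let top := (n - L)./2 + L - 1 in
  top :: widen top top (nseq (L - 1) false ++ alternate true (n - L)).

Lemma zigzag_arc_path n L : 2 <= L <= n ->
  arc_path n L ((n - L)./2) true (zigzag_path n L).
Proof.
move=> le2Ln; rewrite /zigzag_path; set a := (n - L)./2; set top := a + L - 1.
set ds := nseq (L - 1) false ++ alternate true (n - L).
have [count_neg count_id] := count_alternate true (n - L).
have count_ds : count negb ds = L - 1 + a /\ count id ds = n - L - a.
  by rewrite !count_cat !count_nseq count_neg count_id /=; lia.
have mem_top z : z \in top :: widen top top ds -> z < n.
  by rewrite inE => /orP[/eqP -> | /mem_widen]; lia.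
split.
- by rewrite /= size_widen size_cat size_nseq size_alternate; lia.
- by apply: uniq_widen; lia.
- exact/allP.
- by apply: noncrossing_widen; lia.
move=> f /steps_walk_down walk.
have [arc_side | zigzag_step] : _ \/ _ := walk ltac:(lia); first by left; lia.
move: zigzag_step; rewrite (_ : top - (L - 1) = a); last lia.
move=> /steps_zigzag zigzag; have [long sum] := zigzag ltac:(rewrite count_neg; lia).
by right; rewrite /top in long sum; clear -long sum le2Ln; split; lia.
Qed.

Lemma arc_path_reflect n L a p : 2 <= L -> a + L <= n ->
  arc_path n L a true p -> arc_path n L (n - L - a) false [seq n.-1 - c | c <- p].
Proof.
move=> le2L le_aLn [size_p uniq_p /allP lt_p noncross_p steps_p].
split.
- by rewrite size_map.
- by rewrite map_inj_in_uniq // => c d /lt_p /= ltcn /lt_p /= ltdn; lia.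
- by apply/allP => _ /mapP[c /lt_p /= ltcn ->] /=; lia.
- rewrite /noncrossing steps_map => _ _ /mapP[f f_in ->] /mapP[g g_in ->] /=.
  have [/lt_p /= ? /lt_p /= ?] := mem_steps f_in.
  have [/lt_p /= ? /lt_p /= ?] := mem_steps g_in.
  move=> reflected; apply: (noncross_p f g f_in g_in).
  by apply: (interleaved_reflect (N := n.-1)) reflected; lia.
- rewrite steps_map => _ /mapP[[u v] uv_in ->] /=.
  have [/lt_p /= ltun /lt_p /= ltvn] := mem_steps uv_in.
  by case: (steps_p _ uv_in) => /= [[unit range] | [long sum]]; [left | right]; lia.
Qed.

Lemma arc_path_exists n L up : 2 <= L <= n ->
  exists a p, a + L <= n /\ arc_path n L a up p.
Proof.
move=> le2Ln; have zigzag := zigzag_arc_path le2Ln.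
case: up; first by exists (n - L)./2, (zigzag_path n L); split => //; lia.
exists (n - L - (n - L)./2), [seq n.-1 - c | c <- zigzag_path n L].
by split; [lia | apply: arc_path_reflect => //; lia].
Qed.

Section Placement.
Variables (n : nat) (n_gt0 : 0 < n).

Definition vtx (c : nat) : 'I_n := Ordinal (ltn_pmod c n_gt0).

Lemma vtx_eq c d : (vtx c == vtx d) = (c == d %[mod n]).
Proof. by []. Qed.

Lemma vtx_ord (x : 'I_n) : vtx x = x.
Proof. by apply: val_inj; rewrite /= modn_small. Qed.

Lemma vtx_addr_inj K c d : c < n -> d < n -> vtx (c + K) = vtx (d + K) -> c = d.
Proof. by move=> ltcn ltdn /eqP; rewrite vtx_eq eqn_modDr !modn_small // => /eqP. Qed.

Lemma card_pair_lt (U V z : 'I_n) : U != V ->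
  #|[set w in [set U; V] | w < z]| = (U < z) + (V < z).
Proof.
move=> neqUV; rewrite -sum1_card (eq_bigl [pred w in [set U; V] | w < z]) => [|w].
  by rewrite big_mkcondr big_setU1 ?inE //= big_set1; case: (U < z); case: (V < z).
by rewrite !inE.
Qed.

Lemma interleaved_of_cross (U V X Y : 'I_n) : U != V -> X != Y ->
  cross [set U; V] [set X; Y] -> interleaved U V X Y.
Proof.
move=> neqUV neqXY /andP[disj /existsP[b1 /andP[b1_in /existsP[b2 /andP[b2_in]]]]].
rewrite /between !card_pair_lt //.
have /andP[XNUV YNUV] : (X \notin [set U; V]) && (Y \notin [set U; V]).
  by rewrite !(disjointFl disj) // !inE eqxx ?orbT.
have val_neq (c d : 'I_n) : c != d -> c <> d :> nat by move=> /eqP neq /val_inj.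
move: XNUV YNUV neqUV neqXY; rewrite !inE !negb_or => /andP[/val_neq ? /val_neq ?].
move=> /andP[/val_neq ? /val_neq ?] /val_neq ? /val_neq ?.
rewrite /interleaved /strictly_between.
by move: b1_in b2_in; rewrite !inE => /orP[]/eqP-> /orP[]/eqP->; lia.
Qed.

Lemma dir_pair (U V : 'I_n) : U != V -> dir [set U; V] = (U + V) %% n.
Proof. by move=> neqUV; rewrite /dir big_setU1 ?inE //= big_set1. Qed.

Lemma is_SHP_placed (p : seq nat) K :
  size p = n -> uniq p -> all (gtn n) p -> noncrossing p ->
  is_SHP [seq vtx (c + K) | c <- p].
Proof.
move=> size_p uniq_p /allP lt_p noncross_p.
have place_inj : {in p &, injective (fun c => vtx (c + K))}.
  by move=> c d /lt_p ltcn /lt_p ltdn; apply: vtx_addr_inj.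
have neq_place h : h \in steps p -> vtx (h.1 + K) != vtx (h.2 + K).
  move=> h_in; have [h1_in h2_in] := mem_steps h_in.
  by apply: contra (steps_neq uniq_p h_in) => /eqP /place_inj ->.
apply/and3P; split.
- by rewrite size_map size_p.
- by rewrite map_inj_in_uniq.
rewrite path_edges_steps steps_map -map_comp.
apply/allP => _ /mapP[f f_in ->]; apply/allP => _ /mapP[g g_in ->] /=.
have [/lt_p ? /lt_p ?] := mem_steps f_in; have [/lt_p ? /lt_p ?] := mem_steps g_in.
apply/negP => /(interleaved_of_cross (neq_place _ f_in) (neq_place _ g_in)) /=.
by move=> rotated; apply: (noncross_p _ _ f_in g_in); apply: interleaved_rot rotated.
Qed.

Section FreeArc.
Variables (s L a : nat) (up : bool) (p : seq nat).
Hypotheses (le2Ln : 2 <= L <= n) (le_aLn : a + L <= n) (arc_p : arc_path n L a up p).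

Let K := s + n - a.
Let place c := vtx (c + K).

Lemma place_arc c : a <= c -> place c = vtx (s + (c - a)).
Proof.
by move=> le_ac; apply/eqP; rewrite vtx_eq (_ : c + K = s + (c - a) + n) ?modnDr //; lia.
Qed.

Lemma dir_place c d : c < n -> d < n -> c != d ->
  dir [set place c; place d] = (c + d + 2 * K) %% n.
Proof.
move=> ltcn ltdn neq_cd; rewrite dir_pair /= ?modnDm; first by congr (_ %% _); lia.
by apply: contra neq_cd => /eqP /vtx_addr_inj ->.
Qed.

Variables (B : {set {set 'I_n}}) (e : {set 'I_n}).
Hypothesis e_def : e = [set vtx s; vtx (s + L - 1)].
Hypothesis e_unique : forall f, f \in B -> dir f = dir e -> f = e.
Hypothesis arc_free : forall j, j < L - 1 -> [set vtx (s + j); vtx (s + j).+1] \notin B.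
Hypothesis side_free : forall f, f \in B -> dir f != (dir e + (if up then 1 else n.-1)) %% n.

Lemma placed_step_notin_blocker u v : (u, v) \in steps p -> [set place u; place v] \notin B.
Proof.
case: arc_p => _ uniq_p /allP lt_p _ steps_p uv_in; apply/negP => uvB.
have [/lt_p /= ltun /lt_p /= ltvn] := mem_steps uv_in.
have neq_uv : u != v := steps_neq uniq_p uv_in.
have e_placed : e = [set place a; place (a + L - 1)].
  by rewrite e_def !place_arc //; [congr [set vtx _; vtx _]; lia | lia].
have dir_e : dir e = (2 * a + L - 1 + 2 * K) %% n.
  by rewrite e_placed dir_place; [congr (_ %% _) | | | apply/eqP]; lia.
case: (steps_p _ uv_in) => /= [[unit [range_u range_v]] | [long [sum | sum]]].
- pose j := minn u v - a.
  have : [set place u; place v] = [set vtx (s + j); vtx (s + j).+1].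
    rewrite !place_arc; try lia.
    by case: unit => unit; [rewrite setUC |]; congr [set vtx _; vtx _]; rewrite /j; lia.
  by move/(congr1 (fun g => g \in B)); rewrite uvB (negbTE (@arc_free j _)) //; lia.
- have eq_e : [set place u; place v] = e.
    by apply: e_unique uvB _; rewrite dir_place // dir_e sum.
  have : (place u \in e) && (place v \in e) by rewrite -eq_e !inE !eqxx orbT.
  rewrite e_placed !inE => /andP[/orP[]/eqP/vtx_addr_inj eq_u /orP[]/eqP/vtx_addr_inj eq_v];
  lia.
- apply: (negP (side_free uvB)); rewrite dir_place // dir_e modnDml.
  case: up in sum *; rewrite /= in sum *; apply/eqP.
    by congr (_ %% _); lia.
  by rewrite (_ : _ + n.-1 = u + v + 2 * K + n) ?modnDr //; lia.
Qed.

End FreeArc.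

Lemma free_arc_not_blocks (B : {set {set 'I_n}}) (e : {set 'I_n}) s L (up : bool) :
  2 <= L <= n -> e = [set vtx s; vtx (s + L - 1)] ->
  (forall f, f \in B -> dir f = dir e -> f = e) ->
  (forall j, j < L - 1 -> [set vtx (s + j); vtx (s + j).+1] \notin B) ->
  (forall f, f \in B -> dir f != (dir e + (if up then 1 else n.-1)) %% n) ->
  ~ blocks B.
Proof.
move=> le2Ln e_def e_unique arc_free side_free blocks_B.
have [a [p [le_aLn arc_p]]] := arc_path_exists up le2Ln.
have [size_p uniq_p all_p noncross_p _] := arc_p.
have /hasP[g g_in gB] := blocks_B _ (is_SHP_placed (s + n - a) size_p uniq_p all_p noncross_p).
move: g_in gB; rewrite path_edges_steps steps_map => /mapP[_ /mapP[[u v] uv_in ->] ->].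
by apply/negP/(placed_step_notin_blocker le2Ln le_aLn arc_p e_def e_unique arc_free side_free).
Qed.

End Placement.

Lemma is_edge_ab_pair n (U V : 'I_n) : is_edge_ab [set U; V] U V.
Proof. by apply/forallP => z; rewrite !inE. Qed.

Lemma odd_dirE m i : 2 <= m -> i < m ->
  (2 * i + 1) %% (2 * m - 1) = if i < m.-1 then 2 * i + 1 else 0.
Proof.
move=> le2m lt_im; case: ifP => [lt_im1 | /negbT]; first by rewrite modn_small //; lia.
by rewrite -leqNgt => le_m1i; rewrite (_ : 2 * i + 1 = 2 * m - 1) ?modnn //; lia.
Qed.

Lemma odd_dir_neq_even m i k : 2 <= m -> i < m -> 0 < k < m ->
  (2 * i + 1) %% (2 * m - 1) != 2 * k.
Proof. by move=> le2m lt_im lt_km; rewrite odd_dirE //; case: ifP; lia. Qed.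

Lemma chord_position lo hi x y : x < y ->
  (lo <= x /\ y <= hi) \/ (lo < x < hi /\ (hi < y \/ y < lo)) \/
  (lo < y < hi /\ (hi < x \/ x < lo)) \/
  ((x <= lo \/ hi <= x) /\ (y <= lo \/ hi <= y)).
Proof. lia. Qed.

Lemma chord_inside_dir_neq m alpha delta i (x y : 'I_(2 * m - 1)) :
  2 <= m -> alpha < m -> i < alpha \/ m - delta <= i < m ->
  x < y -> alpha <= x -> y <= m - delta ->
  dir [set x; y] != (2 * i + 1) %% (2 * m - 1).
Proof.
move=> le2m lt_alpha_m i_free lt_xy le_alpha_x le_y_hi; have lty := ltn_ord y.
have neq_xy : x != y by rewrite -val_eqE neq_ltn lt_xy.
have lt_im : i < m by lia.
rewrite dir_pair // odd_dirE // modn_wrap; last lia.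
by case: ifP; case: ifP; lia.
Qed.

Section Blocker.
Variables (m : nat) (B : {set {set 'I_(2 * m - 1)}}) (alpha delta : nat).
Hypothesis le2m : 2 <= m.
Hypothesis dirs_B :
  forall f, f \in B -> exists i, i < m /\ dir f = (2 * i + 1) %% (2 * m - 1).
Hypothesis sides_before : forall i, i < alpha -> forall f, f \in B -> ~~ is_edge_ab f i i.+1.
Hypothesis sides_after :
  forall i, m - delta <= i < m -> forall f, f \in B -> ~~ is_edge_ab f i i.+1.

Lemma blocker_dir_neq_even f k : f \in B -> 0 < k < m -> dir f != 2 * k.
Proof. by move=> /dirs_B[i [lt_im ->]]; apply: odd_dir_neq_even. Qed.

Lemma side_notin_blocker (U V : 'I_(2 * m - 1)) :
  V = U.+1 %% (2 * m - 1) :> nat -> U < alpha \/ m - delta <= U -> [set U; V] \notin B.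
Proof.
move=> V_succ U_free; apply/negP => UVB; have ltU := ltn_ord U.
have V_wrap : V = (if U.+1 < 2 * m - 1 then U.+1 else 0) :> nat.
  rewrite V_succ modn_wrap; last lia.
  by case: ifP => // _; lia.
case: (ltnP U m) => [lt_Um | le_mU].
- have UV_side : is_edge_ab [set U; V] U U.+1.
    by rewrite (_ : U.+1 = V) ?is_edge_ab_pair //; move: V_wrap; case: ifP; lia.
  case: U_free => [lt_Ua | le_U].
    by move: (sides_before lt_Ua UVB); rewrite UV_side.
  have U_range : m - delta <= U < m by lia.
  by move: (sides_after U_range UVB); rewrite UV_side.
have neq_UV : U != V by apply/eqP => /(congr1 val) /=; move: V_wrap; case: ifP; lia.
have dir_UV : dir [set U; V] = 2 * (U - m + 1).
  rewrite dir_pair // V_succ modnDmr modn_wrap; last lia.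
  by case: ifP; lia.
have k_range : 0 < U - m + 1 < m by lia.
by move: (blocker_dir_neq_even UVB k_range); rewrite dir_UV eqxx.
Qed.

Variables (e : {set 'I_(2 * m - 1)}) (i0 : nat).
Hypothesis lt_i0m : i0 < m.
Hypothesis dir_e : dir e = (2 * i0 + 1) %% (2 * m - 1).
Hypothesis e_unique : forall f, f \in B -> dir f = dir e -> f = e.

Lemma adjacent_dir_notin_blocker f : f \in B ->
  dir f != (dir e + (if i0 < m.-1 then 1 else (2 * m - 1).-1)) %% (2 * m - 1).
Proof.
move=> f_in; rewrite dir_e odd_dirE //.
rewrite (_ : _ %% _ = 2 * (if i0 < m.-1 then i0.+1 else m.-1)).
  by apply: blocker_dir_neq_even f_in _; case: ifP; lia.
by case: ifP => lt_i0; rewrite modn_small; lia.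
Qed.

Lemma chord_free_arc_not_blocks (n_gt0 : 0 < 2 * m - 1) s L :
  2 <= L <= 2 * m - 1 -> e = [set vtx n_gt0 s; vtx n_gt0 (s + L - 1)] ->
  (forall j, j < L - 1 ->
     (s + j) %% (2 * m - 1) < alpha \/ m - delta <= (s + j) %% (2 * m - 1)) ->
  ~ blocks B.
Proof.
move=> le2L e_arc arc_free; apply: free_arc_not_blocks le2L e_arc e_unique _ _.
  move=> j /arc_free free_j; apply: side_notin_blocker; last exact: free_j.
  by rewrite /= -(addn1 (s + j)) -modnDml addn1.
exact: adjacent_dir_notin_blocker.
Qed.

Lemma chord_in_Abar_not_blocks (x y : 'I_(2 * m - 1)) : x < y -> e = [set x; y] ->
  x <= alpha \/ m - delta <= x -> y <= alpha \/ m - delta <= y -> ~ blocks B.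
Proof.
move=> lt_xy e_xy x_in y_in; have n_gt0 : 0 < 2 * m - 1 by lia.
have lty := ltn_ord y.
have [arc_xy | arc_yx] := boolP ((y <= alpha) || (m - delta <= x)).
  apply: (chord_free_arc_not_blocks (s := x) (L := y - x + 1)); first lia.
    rewrite e_xy -[x in [set x; _]]vtx_ord -[y in [set _; y]]vtx_ord.
    by congr [set vtx _ _; vtx _ _]; lia.
  by move=> j lt_j; rewrite modn_small; lia.
apply: (chord_free_arc_not_blocks (s := y) (L := 2 * m - 1 - y + x + 1)); first lia.
  rewrite e_xy setUC -[x in [set _; x]]vtx_ord -[y in [set y; _]]vtx_ord.
  congr [set _; _]; apply/eqP; rewrite vtx_eq.
  by rewrite (_ : y + _ - 1 = x + (2 * m - 1)) ?modnDr //; lia.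
by move=> j lt_j; rewrite modn_wrap; [case: ifP | ]; lia.
Qed.

End Blocker.

Theorem proposition4 (m : nat) (B : {set {set 'I_(2*m-1)}})
  (alpha delta : nat) (e : {set 'I_(2*m-1)}) :
  2 <= m ->
  is_blocker B ->
  (* the m edges of B are parallel (or equal) to [0,1],...,[m-1,m], one per direction *)
  (forall i, i < m ->
     exists! f, f \in B /\ dir f = (2 * i + 1) %% (2 * m - 1)) ->
  (forall f, f \in B -> exists i, i < m /\ dir f = (2 * i + 1) %% (2 * m - 1)) ->
  (* [alpha, alpha+1] is the first edge of <0,1,...,m> in B *)
  alpha < m ->
  (exists2 f, f \in B & is_edge_ab f alpha alpha.+1) ->
  (forall i, i < alpha -> forall f, f \in B -> ~~ is_edge_ab f i i.+1) ->
  (* [m-delta-1, m-delta] is the last edge of <0,1,...,m> in B *)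
  delta < m ->
  (exists2 f, f \in B & is_edge_ab f (m - delta - 1) (m - delta)) ->
  (forall i, m - delta <= i < m -> forall f, f \in B -> ~~ is_edge_ab f i i.+1) ->
  (* e in B parallel to one of [0,1],...,[alpha-1,alpha],[m-delta,m-delta+1],...,[m-1,m] *)
  e \in B ->
  (exists i, (i < alpha \/ m - delta <= i < m) /\
             dir e = (2 * i + 1) %% (2 * m - 1)) ->
  (* e joins an internal vertex of A = <alpha,...,m-delta> to an internal vertex of
     Abar = <m-delta,...,2m-2,0,...,alpha> *)
  exists u v : 'I_(2*m-1),
    e = [set u; v] /\ alpha < u < m - delta /\ (m - delta < v \/ v < alpha).
Proof.
move=> le2m [edges_B blocks_B _] unique_dir dirs_B lt_alpha_m _ sides_before _ _ sides_after
  e_in [i0 [i0_free dir_e]].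
have lt_i0m : i0 < m by lia.
have e_unique f : f \in B -> dir f = dir e -> f = e.
  have [g [_ g_unique]] := unique_dir i0 lt_i0m.
  by move=> f_in dir_f; rewrite -(g_unique e) ?(g_unique f) // dir_f.
have [x [y [lt_xy e_xy]]] := is_edge_pair_lt (edges_B e e_in).
case: (chord_position alpha (m - delta) lt_xy) => [[x_in y_in] | [x_A | [y_A | [x_in y_in]]]].
- by move: (chord_inside_dir_neq le2m lt_alpha_m i0_free lt_xy x_in y_in); rewrite -e_xy dir_e eqxx.
- by exists x, y.
- by exists y, x; rewrite e_xy setUC.
- by case: (chord_in_Abar_not_blocks le2m dirs_B sides_before sides_after lt_i0m dir_e
    e_unique lt_xy e_xy x_in y_in).
Qed.
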